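(* Let $X\in\mathbb{R}^{n\times p}$, $\mathbf y\in\mathbb{R}^n$, $\mathbf y\neq\mathbf 0$, $0<\lambda_1\le\|X^T\mathbf y\|_\infty$, $0<\lambda_2<\lambda_1$, and $\mathbf x\in\mathbb{R}^n$ with $\mathbf x\neq\mathbf 0$. Let $\mathbf a=\frac{\mathbf y}{\lambda_1}-\boldsymbol\theta_1^*$ and $\mathbf b=\frac{\mathbf y}{\lambda_2}-\boldsymbol\theta_1^*$. Consider the optimization problem $$\min_{\mathbf r\in\mathbb{R}^n}\ \langle\mathbf x,\mathbf r\rangle\quad\text{subject to}\quad \langle\mathbf a,\mathbf r+\mathbf b\rangle\le 0,\ \ \|\mathbf r\|_2^2\le\|\mathbf b\|_2^2.$$ Its optimal value equals $-\|\mathbf x\|_2\|\mathbf b\|_2$ if $\frac{\langle\mathbf b,\mathbf a\rangle}{\|\mathbf b\|_2}\le\frac{\langle\mathbf x,\mathbf a\rangle}{\|\mathbf x\|_2}$, and otherwise (in which case $\mathbf a\ne\mathbf 0$) it equals $$-\|\mathbf x^\perp\|_2\sqrt{\|\mathbf b\|_2^2-\frac{\langle\mathbf b,\mathbf a\rangle^2}{\|\mathbf a\|_2^2}}-\frac{\langle\mathbf a,\mathbf b\rangle\langle\mathbf x,\mathbf a\rangle}{\|\mathbf a\|_2^2},$$ where $\mathbf x^\perp=\mathbf x-\mathbf a\frac{\langle\mathbf x,\mathbf a\rangle}{\|\mathbf a\|_2^2}$.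
   Context: $X\in\mathbb{R}^{n\times p}$ is a matrix and $\mathbf y\in\mathbb{R}^n$ a vector. Let $F=\{\boldsymbol\theta\in\mathbb{R}^n:\|X^T\boldsymbol\theta\|_\infty\le 1\}$. For $\lambda>0$, the Lasso dual optimum $\boldsymbol\theta^*(\lambda)$ is the unique minimizer of $\frac12\|\boldsymbol\theta-\mathbf y/\lambda\|_2^2$ over $\boldsymbol\theta\in F$, i.e. the Euclidean projection of $\mathbf y/\lambda$ onto $F$. Write $\boldsymbol\theta_1^*=\boldsymbol\theta^*(\lambda_1)$. *)

From HB Require Import structures.
From mathcomp Require Import all_boot all_order all_algebra.
Set Implicit Arguments. Unset Strict Implicit. Unset Printing Implicit Defensive.
Import Order.TTheory GRing.Theory Num.Theory.
Local Open Scope ring_scope.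

Definition dotv (R : rcfType) (n : nat) (u v : 'cV[R]_n) : R :=
  \sum_(i < n) u i 0 * v i 0.

Definition norm2 (R : rcfType) (n : nat) (u : 'cV[R]_n) : R :=
  Num.sqrt (dotv u u).

Definition norminf (R : rcfType) (n : nat) (u : 'cV[R]_n) : R :=
  \big[Num.max/0]_(i < n) `|u i 0|.

Definition inF (R : rcfType) (n p : nat) (X : 'M[R]_(n, p)) (th : 'cV[R]_n) : Prop :=
  norminf (X^T *m th) <= 1.

Definition is_dual_opt (R : rcfType) (n p : nat) (X : 'M[R]_(n, p))
  (y : 'cV[R]_n) (lam : R) (th : 'cV[R]_n) : Prop :=
  inF X th /\
  forall t : 'cV[R]_n, inF X t ->
    2^-1 * dotv (th - lam^-1 *: y) (th - lam^-1 *: y)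
    <= 2^-1 * dotv (t - lam^-1 *: y) (t - lam^-1 *: y).

From HB Require Import structures.
From mathcomp Require Import all_boot all_order all_algebra.
From mathcomp Require Import ring lra.
Import Order.TTheory GRing.Theory Num.Theory.
Set Implicit Arguments. Unset Strict Implicit.
Local Open Scope ring_scope.

(* We compute  min { <x,r> : <a, r + b> <= 0, |r|^2 <= |b|^2 }  for arbitrary
   vectors a, b and x != 0 ([halfball_min]).

   - If  <b,a>/|b| <= <x,a>/|x|,  the minimiser r0 = -(|b|/|x|) x of <x,.> over
     the ball already lies in the half-space, and by Cauchy-Schwarz -|x||b| is
     the minimum.
   - Otherwise a != 0.  Write x = x_perp + (<x,a>/|a|^2) a with x_perp _|_ a and
     let s = sqrt(|b|^2 - <a,b>^2/|a|^2) be the distance from b to the line Ra.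
     The point r* = -(<a,b>/|a|^2) a - (s/|x_perp|) x_perp lies on both
     constraint boundaries and attains the claimed value v.  For the lower
     bound we use the weak-duality identity
       s (<x,r> - v) = |x_perp| (|b|^2 - <r*,r>)
                       + (<a,r> + <a,b>) (s <x,a> - |x_perp| <a,b>) / |a|^2,
     whose right side is nonnegative on the feasible set: the first term by
     Cauchy-Schwarz, the second because s <x,a> <= |x_perp| <a,b>, a comparison
     of angles in the plane spanned by the coordinates along x_perp and a
     ([angle_order]).  When s = 0 the ball touches the half-space only at r*
     ([ball_tangent_point]). *)

(* Two vectors (p, sqrt k u) and (s, sqrt k w) of the closed right half-plane,
   of norms nx and nb: if the second is steeper, u/nx < w/nb, then the
   determinant p w - s u is nonnegative.  The proof factors
   (p w)^2 - (s u)^2 = (w nx)^2 - (u nb)^2 and compares signs. *)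
Lemma half_plane_order (R : realFieldType) (k p s u w nx nb : R) :
  0 <= p -> 0 <= s -> 0 < nx -> 0 < nb ->
  nx ^+ 2 = p ^+ 2 + k * u ^+ 2 -> nb ^+ 2 = s ^+ 2 + k * w ^+ 2 ->
  u * nb < w * nx -> s * u <= p * w.
Proof.
move=> hp hs hnx hnb ex eb hcross.
have key : (p * w - s * u) * (p * w + s * u) = (w * nx - u * nb) * (w * nx + u * nb).
  by rewrite -!subr_sqr !exprMn ex eb; ring.
rewrite leNgt; apply/negP => hlt.
have hD : 0 < w * nx - u * nb by rewrite subr_gt0.
have [hE|hE] := ltrP 0 (w * nx + u * nb).
  have hG : p * w + s * u < 0.
    have : 0 < (p * w - s * u) * (p * w + s * u) by rewrite key mulr_gt0.
    by rewrite nmulr_rgt0 // subr_lt0.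
  have hw : 0 < w.
    have : 0 < w * nx by lra.
    by rewrite pmulr_lgt0.
  nra.
have hu : u < 0.
  have : u * nb < 0 by lra.
  by rewrite pmulr_llt0.
have hG : 0 <= p * w + s * u.
  have : (p * w - s * u) * (p * w + s * u) <= 0 by rewrite key pmulr_rle0.
  by rewrite nmulr_rle0 // subr_lt0.
nra.
Qed.

Lemma half_plane_order_axis (R : realFieldType) (k p u w nx nb : R) :
  0 <= p -> 0 < nx -> 0 < nb ->
  nx ^+ 2 = p ^+ 2 + k * u ^+ 2 -> nb ^+ 2 = k * w ^+ 2 ->
  u * nb < w * nx -> 0 <= w.
Proof.
move=> hp hnx hnb ex eb hcross.
have eb0 : nb ^+ 2 = 0 ^+ 2 + k * w ^+ 2 by rewrite expr0n add0r.
have := half_plane_order hp (lexx 0) hnx hnb ex eb0 hcross.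
rewrite mul0r => hpw; rewrite leNgt; apply/negP => hw.
have p0 : p = 0 by nra.
move: ex; rewrite p0 expr0n add0r => ex.
have hwnx : w * nx < 0 by rewrite pmulr_llt0.
have sq_eq : (u * nb) ^+ 2 = (w * nx) ^+ 2 by rewrite !exprMn ex eb; ring.
have : 0 < (w * nx - u * nb) * (- (u * nb + w * nx)) by apply: mulr_gt0; lra.
have -> : (w * nx - u * nb) * (- (u * nb + w * nx)) = (u * nb) ^+ 2 - (w * nx) ^+ 2.
  by ring.
by rewrite sq_eq subrr ltxx.
Qed.

(* The two comparisons above, from the quotient form u/nx < w/nb, which also
   covers the degenerate norm nb = 0 (where s = w = 0). *)
Lemma angle_order (R : realFieldType) (k p s u w nx nb : R) :
  0 < k -> 0 <= p -> 0 <= s -> 0 < nx -> 0 <= nb ->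
  nx ^+ 2 = p ^+ 2 + k * u ^+ 2 -> nb ^+ 2 = s ^+ 2 + k * w ^+ 2 ->
  u / nx < w / nb -> s * u <= p * w /\ (s = 0 -> 0 <= w).
Proof.
move=> hk hp hs hnx hnb ex eb.
have [nb0|nb_neq0] := eqVneq nb 0.
  move: eb; rewrite nb0 expr0n => /esym/eqP.
  rewrite paddr_eq0 ?sqr_ge0 ?(mulr_ge0 (ltW hk) (sqr_ge0 w)) //.
  rewrite !sqrf_eq0 mulf_eq0 (gt_eqF hk) sqrf_eq0 /= => /andP[/eqP-> /eqP->] _.
  by rewrite mul0r mulr0.
have nb_gt0 : 0 < nb by rewrite lt0r nb_neq0.
rewrite ltr_pdivrMr // mulrAC ltr_pdivlMr // => hcross.
split; first exact: half_plane_order hp hs hnx nb_gt0 ex eb hcross.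
move=> s0; apply: half_plane_order_axis hp hnx nb_gt0 ex _ hcross.
by rewrite eb s0 expr0n add0r.
Qed.

Section InnerProduct.
Variables (R : rcfType) (n : nat).
Implicit Types u v w : 'cV[R]_n.

Lemma dotvC u v : dotv u v = dotv v u.
Proof. by apply: eq_bigr => i _; rewrite mulrC. Qed.

Lemma dotvDl u v w : dotv (u + v) w = dotv u w + dotv v w.
Proof. by rewrite /dotv -big_split; apply: eq_bigr => i _; rewrite !mxE mulrDl. Qed.

Lemma dotvDr u v w : dotv u (v + w) = dotv u v + dotv u w.
Proof. by rewrite dotvC dotvDl !(dotvC u). Qed.

Lemma dotvZl k u v : dotv (k *: u) v = k * dotv u v.
Proof. by rewrite /dotv mulr_sumr; apply: eq_bigr => i _; rewrite !mxE mulrA. Qed.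

Lemma dotvZr k u v : dotv u (k *: v) = k * dotv u v.
Proof. by rewrite dotvC dotvZl dotvC. Qed.

Lemma dotvNl u v : dotv (- u) v = - dotv u v.
Proof. by rewrite -scaleN1r dotvZl mulN1r. Qed.

Lemma dotvNr u v : dotv u (- v) = - dotv u v.
Proof. by rewrite dotvC dotvNl dotvC. Qed.

Lemma dotvBl u v w : dotv (u - v) w = dotv u w - dotv v w.
Proof. by rewrite dotvDl dotvNl. Qed.

Lemma dotvBr u v w : dotv u (v - w) = dotv u v - dotv u w.
Proof. by rewrite dotvDr dotvNr. Qed.

Lemma dotv0l v : dotv 0 v = 0.
Proof. by rewrite /dotv big1 // => i _; rewrite mxE mul0r. Qed.

Lemma dotv0r v : dotv v 0 = 0.
Proof. by rewrite dotvC dotv0l. Qed.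

Lemma dotv_ge0 u : 0 <= dotv u u.
Proof. by apply: sumr_ge0 => i _; rewrite -expr2 sqr_ge0. Qed.

Lemma dotv_eq0 u : dotv u u = 0 -> u = 0.
Proof.
move/eqP; rewrite psumr_eq0; last by move=> i _; rewrite -expr2 sqr_ge0.
move/allP=> H; apply/matrixP=> i j; rewrite ord1 mxE; apply/eqP.
by have := H i (mem_index_enum _); rewrite /= mulf_eq0 orbb.
Qed.

Lemma norm2_sq u : norm2 u ^+ 2 = dotv u u.
Proof. by rewrite sqr_sqrtr // dotv_ge0. Qed.

Lemma norm2_ge0 u : 0 <= norm2 u.
Proof. exact: sqrtr_ge0. Qed.

Lemma norm2_eq0 u : norm2 u = 0 -> u = 0.
Proof. by move=> h; apply: dotv_eq0; rewrite -norm2_sq h expr0n. Qed.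

Lemma norm2_gt0 u : u != 0 -> 0 < norm2 u.
Proof.
move=> hu; rewrite lt0r norm2_ge0 andbT.
by apply: contra hu => /eqP/norm2_eq0 ->.
Qed.

(* Cauchy-Schwarz, from |v| u - |u| v having nonnegative squared norm. *)
Lemma cauchy_schwarz u v : dotv u v <= norm2 u * norm2 v.
Proof.
have [->|hu] := eqVneq u 0; first by rewrite dotv0l mulr_ge0 ?norm2_ge0.
have [->|hv] := eqVneq v 0; first by rewrite dotv0r mulr_ge0 ?norm2_ge0.
have hnu := norm2_gt0 hu; have hnv := norm2_gt0 hv.
have := dotv_ge0 (norm2 v *: u - norm2 u *: v).
rewrite !(dotvBl, dotvBr, dotvZl, dotvZr) -!norm2_sq (dotvC v u) => h.
have : 0 <= (norm2 u * norm2 v) * (norm2 u * norm2 v - dotv u v) by nra.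
by rewrite pmulr_rge0 ?mulr_gt0 // subr_ge0.
Qed.

Lemma norm2_le_sq u v : norm2 u ^+ 2 <= norm2 v ^+ 2 -> norm2 u <= norm2 v.
Proof. by move=> h; rewrite -(ler_pXn2r (_ : (0 < 2)%N)) ?nnegrE ?norm2_ge0. Qed.

Lemma dotv_le_ball u v w :
  norm2 u ^+ 2 <= norm2 w ^+ 2 -> norm2 v ^+ 2 <= norm2 w ^+ 2 ->
  dotv u v <= norm2 w ^+ 2.
Proof.
move=> /norm2_le_sq hu /norm2_le_sq hv; apply: le_trans (cauchy_schwarz u v) _.
by rewrite expr2 ler_pM ?norm2_ge0.
Qed.

Lemma cauchy_schwarz_lower u v : - (norm2 u * norm2 v) <= dotv u v.
Proof.
rewrite lerNl -dotvNl.
have -> : norm2 u = norm2 (- u) by rewrite /norm2 dotvNl dotvNr opprK.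
exact: cauchy_schwarz.
Qed.

End InnerProduct.

Section OrthogonalProjection.
Variables (R : rcfType) (n : nat) (a : 'cV[R]_n).
Hypothesis a_neq0 : a != 0.

Local Notation A := (dotv a a).
Local Notation perp u := (u - (dotv u a / A) *: a).

Lemma dotv_self_gt0 : 0 < A.
Proof. by rewrite -norm2_sq exprn_gt0 // norm2_gt0. Qed.

Lemma dotv_self_neq0 : A != 0.
Proof. by rewrite gt_eqF ?dotv_self_gt0. Qed.

Lemma dotv_perp u : dotv a (perp u) = 0.
Proof. by rewrite dotvBr dotvZr (dotvC a u) divfK ?dotv_self_neq0 // subrr. Qed.

Lemma dotv_perp_self u : dotv u (perp u) = dotv (perp u) (perp u).
Proof. by rewrite [in RHS]dotvBl dotvZl dotv_perp mulr0 subr0. Qed.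

Lemma dotv_perp_perp u : dotv (perp u) (perp u) = dotv u u - dotv u a ^+ 2 / A.
Proof. by rewrite -dotv_perp_self dotvBr dotvZr; field; exact: dotv_self_neq0. Qed.

End OrthogonalProjection.

Lemma ball_tangent_point (R : rcfType) (n : nat) (c r : 'cV[R]_n) :
  dotv r r <= dotv c c -> dotv c (r + c) <= 0 -> r = - c.
Proof.
move=> hball hhalf; apply/eqP; rewrite -addr_eq0; apply/eqP/dotv_eq0.
have expand : dotv (r + c) (r + c) = dotv r r - dotv c c + 2 * dotv c (r + c).
  by rewrite !(dotvDl, dotvDr) (dotvC r c); ring.
by apply/eqP; rewrite eq_le dotv_ge0 andbT expand; lra.
Qed.

Definition halfball (R : rcfType) (n : nat) (a b r : 'cV[R]_n) : Prop :=
  dotv a (r + b) <= 0 /\ norm2 r ^+ 2 <= norm2 b ^+ 2.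

Lemma ball_lower_bound (R : rcfType) (n : nat) (b x r : 'cV[R]_n) :
  norm2 r ^+ 2 <= norm2 b ^+ 2 -> - (norm2 x * norm2 b) <= dotv x r.
Proof.
move=> hr; apply: le_trans (cauchy_schwarz_lower x r).
by rewrite lerN2 ler_wpM2l ?norm2_ge0 ?norm2_le_sq.
Qed.

Lemma ball_minimizer_feasible (R : rcfType) (n : nat) (a b x : 'cV[R]_n) :
  x != 0 -> dotv b a / norm2 b <= dotv x a / norm2 x ->
  halfball a b (- (norm2 b / norm2 x) *: x) /\
  dotv x (- (norm2 b / norm2 x) *: x) = - (norm2 x * norm2 b).
Proof.
move=> hx cond; have hnx := norm2_gt0 hx.
have hnx0 : norm2 x != 0 by rewrite gt_eqF.
split; last by rewrite dotvZr -norm2_sq; field.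
split; last first.
  rewrite !norm2_sq dotvZl dotvZr -!norm2_sq.
  by rewrite le_eqVlt; apply/predU1l; field.
rewrite dotvDr dotvZr (dotvC a x) (dotvC a b).
have [b0|hb] := eqVneq b 0; first by rewrite b0 /norm2 !dotv0l sqrtr0 mul0r oppr0 mul0r addr0.
move: cond; rewrite ler_pdivrMr ?norm2_gt0 // => cond.
have -> : - (norm2 b / norm2 x) * dotv x a = - (dotv x a / norm2 x * norm2 b) by field.
by rewrite addrC subr_le0.
Qed.

Section CutCase.
Variables (R : rcfType) (n : nat) (a b x : 'cV[R]_n).
Hypothesis a_neq0 : a != 0.

Local Notation A := (dotv a a).
Local Notation B := (dotv b b).
Local Notation xa := (dotv x a).
Local Notation ab := (dotv a b).
Local Notation xperp := (x - (xa / A) *: a).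
Local Notation px := (norm2 xperp).
Local Notation sb := (Num.sqrt (B - ab ^+ 2 / A)).
Local Notation rstar := (- (ab / A) *: a - (sb / px) *: xperp).
Local Notation vcut := (- (px * sb) - ab * xa / A).

Let A_gt0 : 0 < A := dotv_self_gt0 a_neq0.
Let A_neq0 : A != 0 := dotv_self_neq0 a_neq0.

Lemma sb_sq : sb ^+ 2 = B - ab ^+ 2 / A.
Proof.
rewrite sqr_sqrtr // (dotvC a b) -dotv_perp_perp //; exact: dotv_ge0.
Qed.

Lemma dotv_x_xperp : dotv x xperp = px ^+ 2.
Proof. by rewrite norm2_sq dotv_perp_self. Qed.

(* The decompositions of x and b along R a and its orthogonal complement, in
   the form used by [angle_order]:  |x|^2 = |x_perp|^2 + <x,a>^2/|a|^2  and
   |b|^2 = sb^2 + <a,b>^2/|a|^2. *)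
Lemma norm_x_split : norm2 x ^+ 2 = px ^+ 2 + A^-1 * xa ^+ 2.
Proof. by rewrite !norm2_sq dotv_perp_perp //; field. Qed.

Lemma norm_b_split : norm2 b ^+ 2 = sb ^+ 2 + A^-1 * ab ^+ 2.
Proof. by rewrite sb_sq norm2_sq; field. Qed.

Lemma rstar_dot_a : dotv a rstar = - ab.
Proof.
by rewrite dotvBr !dotvZr dotv_perp // mulr0 subr0 mulNr divfK.
Qed.

Lemma rstar_dot_x : dotv x rstar = vcut.
Proof.
rewrite dotvBr !dotvZr dotv_x_xperp.
have [->|px_neq0] := eqVneq px 0; first by rewrite expr0n /= !mulr0 !mul0r; field.
by field; rewrite A_neq0 px_neq0.
Qed.

Lemma rstar_feasible : halfball a b rstar.
Proof.
split; first by rewrite dotvDr rstar_dot_a addNr.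
rewrite !norm2_sq; have := dotv_perp a_neq0 x.
move: xperp => w w_orth.
rewrite !(dotvBl, dotvBr, dotvZl, dotvZr) (dotvC w a) w_orth -(norm2_sq w).
have sq_le : (sb / norm2 w) * ((sb / norm2 w) * norm2 w ^+ 2) <= sb ^+ 2.
  have [->|w_neq0] := eqVneq (norm2 w) 0; first by rewrite expr0n /= !mulr0 sqr_ge0.
  by rewrite le_eqVlt; apply/predU1l; field; rewrite w_neq0.
rewrite sb_sq in sq_le.
rewrite !mulr0 subr0 sub0r opprK.
have -> : - (ab / A) * (- (ab / A) * A) = ab ^+ 2 / A by field.
lra.
Qed.

(* Weak-duality certificate: the multipliers of the two constraints at rstar
   are proportional to px and (sb xa - px ab)/A; multiplied by sb the
   optimality gap becomes a nonnegative combination of the constraint slacks. *)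
Lemma lagrange_identity r :
  sb * (dotv x r - vcut) =
  px * (B - dotv rstar r) + (dotv a r + ab) * (sb * xa - px * ab) / A.
Proof.
have dx : dotv x r = dotv xperp r + xa / A * dotv a r by rewrite dotvBl dotvZl subrK.
have dr : dotv rstar r = - (ab / A) * dotv a r - sb / px * dotv xperp r.
  by rewrite dotvBl !dotvZl.
rewrite dx dr; have [px0|px_neq0] := eqVneq px 0.
  have -> : dotv xperp r = 0 by rewrite (norm2_eq0 px0) dotv0l.
  by rewrite px0 invr0; field; rewrite A_neq0.
move: (dotv xperp r) (dotv a r) px_neq0 sb_sq => q t.
move: sb px => S P P_neq0 eS.
have -> : B = S ^+ 2 + ab ^+ 2 / A by rewrite eS; field.
by field; rewrite A_neq0 P_neq0.
Qed.

(* The lower bound in the cut case, given the planar comparisons that follow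
   from  <x,a>/|x| < <b,a>/|b|. *)
Lemma cut_lower_bound r :
  sb * xa <= px * ab -> (sb = 0 -> 0 <= ab) -> halfball a b r -> vcut <= dotv x r.
Proof.
move=> hcross hdeg [hhalf hball].
have [sb0|sb_neq0] := eqVneq sb 0.
  have c_norm : dotv ((ab / A) *: a) ((ab / A) *: a) = B.
    have := sb_sq; rewrite sb0 expr0n dotvZl dotvZr => /eqP; rewrite eq_sym subr_eq0.
    by move/eqP => ->; field.
  have c_half : dotv ((ab / A) *: a) (r + (ab / A) *: a) <= 0.
    rewrite dotvZl dotvDr dotvZr divfK //.
    by rewrite dotvDr in hhalf; apply: mulr_ge0_le0 => //; rewrite divr_ge0 ?(hdeg sb0) ?ltW.
  have -> : r = - ((ab / A) *: a).
    by apply: ball_tangent_point c_half; rewrite c_norm -!norm2_sq.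
  by rewrite dotvNr dotvZr sb0 mulr0 oppr0 sub0r mulrAC.
have sb_gt0 : 0 < sb by rewrite lt0r sb_neq0 sqrtr_ge0.
rewrite -subr_ge0 -(pmulr_rge0 _ sb_gt0) lagrange_identity.
apply: addr_ge0.
  rewrite mulr_ge0 ?norm2_ge0 // subr_ge0.
  by have := dotv_le_ball (proj2 rstar_feasible) hball; rewrite norm2_sq.
rewrite -mulrA mulr_le0 //; first by rewrite -dotvDr.
by rewrite pmulr_lle0 ?invr_gt0 // subr_le0.
Qed.

End CutCase.

Lemma halfball_min (R : rcfType) (n : nat) (a b x : 'cV[R]_n) : x != 0 ->
  let cond := dotv b a / norm2 b <= dotv x a / norm2 x in
  let xperp := x - (dotv x a / norm2 a ^+ 2) *: a in
  let v :=
    if cond then - (norm2 x * norm2 b)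
    else - (norm2 xperp * Num.sqrt (norm2 b ^+ 2 - dotv b a ^+ 2 / norm2 a ^+ 2))
         - dotv a b * dotv x a / norm2 a ^+ 2 in
  (~~ cond -> a != 0) /\
  (exists r, halfball a b r /\ dotv x r = v) /\
  (forall r, halfball a b r -> v <= dotv x r).
Proof.
move=> hx cond xperp v; rewrite {}/v {}/xperp {}/cond.
case: ifPn => [ball_case|cut_case].
  split=> //; split; first by eexists; exact: ball_minimizer_feasible.
  by move=> r [_ hr]; exact: ball_lower_bound.
have a_neq0 : a != 0.
  by apply: contraNneq cut_case => ->; rewrite !dotv0r !mul0r.
split=> //; rewrite !norm2_sq (dotvC b a).
have A_inv_gt0 : 0 < (dotv a a)^-1 by rewrite invr_gt0 dotv_self_gt0.
have cross : dotv x a / norm2 x < dotv a b / norm2 b by rewrite ltNge (dotvC a b).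
have [hcross hdeg] := angle_order A_inv_gt0 (norm2_ge0 _) (sqrtr_ge0 _)
  (norm2_gt0 hx) (norm2_ge0 b) (norm_x_split x a_neq0) (norm_b_split b a_neq0) cross.
split; first by eexists; split; [exact: rstar_feasible | exact: rstar_dot_x].
by move=> r; exact: cut_lower_bound.
Qed.

Theorem theorem2 (R : rcfType) (n p : nat) (X : 'M[R]_(n, p)) (y : 'cV[R]_n)
  (lam1 lam2 : R) (x th1 : 'cV[R]_n)
  (hy : y != 0) (hl1 : 0 < lam1) (hl1y : lam1 <= norminf (X^T *m y))
  (hl2 : 0 < lam2) (hl21 : lam2 < lam1) (hx : x != 0)
  (hth1 : is_dual_opt X y lam1 th1) :
  let a := lam1^-1 *: y - th1 in
  let b := lam2^-1 *: y - th1 in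
  let feasible (r : 'cV[R]_n) :=
    dotv a (r + b) <= 0 /\ norm2 r ^+ 2 <= norm2 b ^+ 2 in
  let cond := dotv b a / norm2 b <= dotv x a / norm2 x in
  let xperp := x - (dotv x a / norm2 a ^+ 2) *: a in
  let v :=
    if cond then - (norm2 x * norm2 b)
    else - (norm2 xperp * Num.sqrt (norm2 b ^+ 2 - dotv b a ^+ 2 / norm2 a ^+ 2))
         - dotv a b * dotv x a / norm2 a ^+ 2 in
  (~~ cond -> a != 0) /\
  (exists r, feasible r /\ dotv x r = v) /\
  (forall r, feasible r -> v <= dotv x r).
Proof. exact: halfball_min. Qed.
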